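(* Let $\{\ell_k\}_{k\in\mathbb{N}_0}$ be a sequence of nonnegative integers. Then the sequence $\{a^{\ell_k}\}_{k\in\mathbb{N}_0}$ is a positive sequence for every $a\in\mathbb{R}$ if and only if there exist $d\in\mathbb{N}_0$ and $\ell_0\in 2\mathbb{N}_0$ such that $\ell_k=kd+\ell_0$ for all $k\in\mathbb{N}_0$ (i.e. $\ell_0$ is even and $\{\ell_k\}$ is a nondecreasing arithmetic progression).
   Context: A sequence of real numbers $\{s_k\}_{k\in\mathbb{N}_0}$ is called positive if for every $n\in\mathbb{N}_0$ the Hankel matrix $(s_{i+j})_{i,j=0}^n$ is positive semidefinite. The convention $0^0=1$ is used. *)

From Stdlib Require Import Reals.
Open Scope R_scope.

Definition hankel_qform (s : nat -> R) (n : nat) (x : nat -> R) : R :=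
  sum_f_R0 (fun i => sum_f_R0 (fun j => x i * s (i + j)%nat * x j) n) n.

Definition hankel_psd (s : nat -> R) (n : nat) : Prop :=
  forall x : nat -> R, 0 <= hankel_qform s n x.

Definition positive_seq (s : nat -> R) : Prop :=
  forall n : nat, hankel_psd s n.

(* The Hankel form of a sequence [c * b ^ k] is [c * (sum_i x_i b^i)^2],
   so [a ^ (k d + l0)] is positive whenever [l0] is even.  Conversely, the 1x1 minor
   at [a = -1] forces [l 0] even, and the 2x2 principal minors give
   [a ^ (2 l(i+j)) <= a ^ (l(2i) + l(2j))] for every [a > 0]; letting [a] be above and
   below [1] turns this into the exact identity [l(2i) + l(2j) = 2 l(i+j)], which makes
   [l] an arithmetic progression (nondecreasing, being a sequence of naturals). *)
From Stdlib Require Import Reals Arith.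
From Stdlib Require Import Lra Lia Psatz.
Open Scope R_scope.

Lemma sum_f_R0_zero (f : nat -> R) (n : nat) :
  (forall k, (k <= n)%nat -> f k = 0) -> sum_f_R0 f n = 0.
Proof.
  intro Hf. rewrite (sum_eq f (fun _ => 0)) by auto.
  rewrite sum_cte; ring.
Qed.

Lemma sum_f_R0_single (f : nat -> R) (i n : nat) :
  (i <= n)%nat -> (forall k, (k <= n)%nat -> k <> i -> f k = 0) ->
  sum_f_R0 f n = f i.
Proof.
  intros Hi Hf. induction n as [|n IH].
  - replace i with 0%nat by lia. reflexivity.
  - rewrite tech5. destruct (Nat.eq_dec i (S n)) as [->|Hne].
    + rewrite sum_f_R0_zero; [ring|]. intros k Hk. apply Hf; lia.
    + rewrite IH, (Hf (S n)); try lia; [ring|].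
      intros k Hk Hki. apply Hf; lia.
Qed.

Lemma sum_f_R0_pair (f : nat -> R) (i j n : nat) :
  (i < j)%nat -> (j <= n)%nat -> (forall k, k <> i -> k <> j -> f k = 0) ->
  sum_f_R0 f n = f i + f j.
Proof.
  intros Hij Hjn Hf. induction n as [|n IH]; [lia|].
  rewrite tech5. destruct (Nat.eq_dec j (S n)) as [->|Hne].
  - rewrite (sum_f_R0_single f i); [ring|lia|].
    intros k Hk Hki. apply Hf; lia.
  - rewrite IH, (Hf (S n)) by lia. ring.
Qed.

Definition pair_vec (i j : nat) (u v : R) : nat -> R :=
  fun k => if Nat.eq_dec k i then u else if Nat.eq_dec k j then v else 0.

Lemma hankel_qform_pair (s : nat -> R) (i j : nat) (u v : R) : (i < j)%nat ->
  hankel_qform s j (pair_vec i j u v) =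
  s (i + i)%nat * u ^ 2 + 2 * s (i + j)%nat * u * v + s (j + j)%nat * v ^ 2.
Proof.
  intro Hij. unfold hankel_qform.
  assert (Hout : forall k, k <> i -> k <> j -> pair_vec i j u v k = 0).
  { intros k Hki Hkj. unfold pair_vec.
    destruct (Nat.eq_dec k i); [lia|]. destruct (Nat.eq_dec k j); [lia|easy]. }
  assert (Hi : pair_vec i j u v i = u).
  { unfold pair_vec. destruct (Nat.eq_dec i i); [easy|lia]. }
  assert (Hj : pair_vec i j u v j = v).
  { unfold pair_vec. destruct (Nat.eq_dec j i); [lia|].
    destruct (Nat.eq_dec j j); [easy|lia]. }
  rewrite (sum_f_R0_pair _ i j j); auto.
  - rewrite !(sum_f_R0_pair _ i j j); auto;
      try (intros k Hki Hkj; rewrite (Hout k) by auto; ring).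
    rewrite Hi, Hj, (Nat.add_comm j i). ring.
  - intros k Hki Hkj. apply sum_f_R0_zero. intros m _. rewrite (Hout k) by auto. ring.
Qed.

Lemma quadratic_form_nonneg_discr (A B C : R) :
  (forall u v, 0 <= A * u ^ 2 + 2 * B * u * v + C * v ^ 2) -> B ^ 2 <= A * C.
Proof.
  intro Hq.
  pose proof (Hq 1 0) as HA. pose proof (Hq 0 1) as HC.
  destruct (Req_dec A 0) as [HA0|HA0].
  - subst A. destruct (Req_dec B 0) as [->|HB0]; [nra|].
    (* with [A = 0] the form is linear in [u], hence unbounded below unless [B = 0] *)
    pose proof (Hq (- (C + 1) / (2 * B)) 1) as Hneg.
    replace (2 * B * (- (C + 1) / (2 * B)) * 1) with (- (C + 1)) in Hneg
      by (field; exact HB0).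
    lra.
  - pose proof (Hq (- B) A) as Hmin.
    assert (0 <= A * (A * C - B ^ 2)) by nra.
    nra.
Qed.

Lemma positive_seq_cauchy_schwarz (s : nat -> R) (i j : nat) :
  positive_seq s -> s (i + j)%nat ^ 2 <= s (i + i)%nat * s (j + j)%nat.
Proof.
  intro Hs.
  destruct (lt_eq_lt_dec i j) as [[Hij| ->]|Hji].
  - apply quadratic_form_nonneg_discr. intros u v.
    rewrite <- hankel_qform_pair by exact Hij. apply Hs.
  - nra.
  - rewrite Nat.add_comm, Rmult_comm.
    apply quadratic_form_nonneg_discr. intros u v.
    rewrite <- hankel_qform_pair by exact Hji. apply Hs.
Qed.

Lemma positive_seq_nonneg0 (s : nat -> R) : positive_seq s -> 0 <= s 0%nat.
Proof.
  intro Hs. pose proof (Hs 0%nat (fun _ => 1)) as H. unfold hankel_qform in H.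
  simpl in H. lra.
Qed.

Lemma even_of_pow_neg1_nonneg (n : nat) : 0 <= (-1) ^ n -> Nat.Even n.
Proof.
  intro Hn. destruct (Nat.Even_or_Odd n) as [|[m ->]]; [easy|].
  rewrite Nat.add_1_r, pow_1_odd in Hn. lra.
Qed.

Lemma pow_exponent_eq (p q : nat) : (forall a, 0 < a -> a ^ q <= a ^ p) -> p = q.
Proof.
  intro Hle. destruct (lt_eq_lt_dec p q) as [[Hpq|Hpq]|Hqp]; [|easy|].
  - pose proof (Rlt_pow 2 p q ltac:(lra) Hpq) as H2.
    pose proof (Hle 2 ltac:(lra)). lra.
  - pose proof (Rlt_pow 2 q p ltac:(lra) Hqp) as H2.
    pose proof (Hle (/ 2) ltac:(lra)) as Hhalf.
    rewrite !pow_inv in Hhalf.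
    pose proof (pow_lt 2 q ltac:(lra)) as Hq. pose proof (pow_lt 2 p ltac:(lra)) as Hp.
    pose proof (Rinv_lt_contravar _ _ (Rmult_lt_0_compat _ _ Hq Hp) H2). lra.
Qed.

Lemma power_positive_midpoint (l : nat -> nat) :
  (forall a : R, positive_seq (fun k => a ^ (l k))) ->
  forall i j, (l (i + i) + l (j + j) = l (i + j) + l (i + j))%nat.
Proof.
  intros Hpos i j. apply pow_exponent_eq. intros a Ha.
  rewrite !pow_add.
  replace (a ^ l (i + j)%nat * a ^ l (i + j)%nat) with ((a ^ l (i + j)%nat) ^ 2) by ring.
  exact (positive_seq_cauchy_schwarz (fun k => a ^ l k) i j (Hpos a)).
Qed.

Lemma midpoint_affine_step (l : nat -> nat) :
  (forall i j, l (i + i) + l (j + j) = l (i + j) + l (i + j))%nat ->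
  forall k, (l (S k) + l 0 = l k + l 1)%nat.
Proof.
  intros Hmid k.
  pose proof (Hmid 0%nat k). pose proof (Hmid 1%nat k). pose proof (Hmid 0%nat 1%nat).
  simpl in *. lia.
Qed.

Lemma nat_arith_prog (l : nat -> nat) :
  (forall k, l (S k) + l 0 = l k + l 1)%nat ->
  forall k, l k = (k * (l 1 - l 0) + l 0)%nat.
Proof.
  intro Hstep.
  assert (Hlin : forall k, (l k + k * l 0 = k * l 1 + l 0)%nat).
  { induction k as [|k IH]; [simpl; lia|]. pose proof (Hstep k). nia. }
  (* needed because of truncated subtraction: otherwise [l] would strictly decrease
     and [l (S (l 0))] would be negative *)
  assert (Hle : (l 0 <= l 1)%nat).
  { destruct (le_lt_dec (l 0%nat) (l 1%nat)) as [|Hlt]; [easy|].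
    pose proof (Hlin (S (l 0%nat))). nia. }
  intro k. pose proof (Hlin k). nia.
Qed.

Lemma positive_seq_geometric (s : nat -> R) (c b : R) :
  0 <= c -> (forall k, s k = c * b ^ k) -> positive_seq s.
Proof.
  intros Hc Hs n x. set (y := fun i => x i * b ^ i).
  assert (Hform : hankel_qform s n x = c * sum_f_R0 y n * sum_f_R0 y n).
  { unfold hankel_qform.
    transitivity (sum_f_R0 (fun i => c * y i * sum_f_R0 y n) n).
    - apply sum_eq. intros i _. rewrite scal_sum. apply sum_eq. intros j _.
      rewrite Hs, pow_add. unfold y. ring.
    - rewrite <- scal_sum, (sum_eq (fun i => c * y i) (fun i => y i * c))
        by (intros; ring).
      rewrite <- scal_sum. ring. }
  rewrite Hform, Rmult_assoc. apply Rmult_le_pos; [exact Hc|nra].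
Qed.

Theorem mainTheorem3 (l : nat -> nat) :
  (forall a : R, positive_seq (fun k => a ^ (l k))) <->
  (exists d l0 : nat, Nat.Even l0 /\ forall k : nat, l k = (k * d + l0)%nat).
Proof.
  split.
  - intro Hpos.
    pose proof (even_of_pow_neg1_nonneg _ (positive_seq_nonneg0 _ (Hpos (-1)))) as Hev.
    pose proof (midpoint_affine_step l (power_positive_midpoint l Hpos)) as Hstep.
    exists (l 1%nat - l 0%nat)%nat, (l 0%nat).
    split; [exact Hev | apply (nat_arith_prog l Hstep)].
  - intros [d [l0 [[m Hm] Hl]]] a.
    apply (positive_seq_geometric _ (a ^ l0) (a ^ d)).
    + rewrite Hm, pow_mult. apply pow_le, pow2_ge_0.
    + intro k. rewrite Hl, pow_add, Nat.mul_comm, pow_mult. ring.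
Qed.
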